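(* Let $\hat{\mathbf Q}=\tilde{\mathbf Q}_{st}+\tilde{\mathbf Q}_{\mathcal I}\varepsilon$ be an $n\times n$ dual quaternion Hermitian matrix and $\epsilon>0$. Then Algorithm 1 applied to $\hat{\mathbf Q}$ with accuracy $\epsilon$ terminates after $T$ iterations, where $T$ is bounded by a fixed positive integer, and the final iterate satisfies $r^{(T)}<\epsilon$. Moreover, if $\mu_1\ge\mu_2\ge\cdots\ge\mu_n$ are the eigenvalues of $\tilde{\mathbf Q}_{st}$ and $d_1\ge d_2\ge\cdots\ge d_n$ are the diagonal entries of $\tilde{\mathbf Q}^{(T)}_{st}$ arranged in nonincreasing order, then $$\max_{1\le i\le n}|\mu_i-d_i|<\sqrt{n(n-1)}\,\epsilon .$$
   Context: Quaternions, dual quaternions $\hat q=q_{st}+q_{\mathcal I}\varepsilon$ ($\varepsilon$ commuting with quaternions, $\varepsilon^2=0$, product $(p_{st}+p_{\mathcal I}\varepsilon)(q_{st}+q_{\mathcal I}\varepsilon)=p_{st}q_{st}+(p_{st}q_{\mathcal I}+p_{\mathcal I}q_{st})\varepsilon$), conjugate transposes, Hermitian and unitary matrices are as usual; a quaternion Hermitian matrix has real eigenvalues and real diagonal. For a dual quaternion matrix $\hat{\mathbf Q}^{(t)}$ write $\hat{\mathbf Q}^{(t)}=\tilde{\mathbf Q}^{(t)}_{st}+\tilde{\mathbf Q}^{(t)}_{\mathcal I}\varepsilon$. Givens matrix: for an $n\times n$ dual quaternion Hermitian $\hat{\mathbf Q}$ and $k<l$ with $\tilde c=(\tilde{\mathbf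 Q}_{st})_{kl}\ne0$, put $a=(\tilde{\mathbf Q}_{st})_{kk}$, $b=(\tilde{\mathbf Q}_{st})_{ll}$, let $\lambda_1,\lambda_2$ be the roots of $(a-x)(b-x)=|\tilde c|^2$, $\rho_i=((a-\lambda_i)^2+|\tilde c|^2)^{1/2}$, $\tilde{\mathbf U}=\begin{bmatrix}-\tilde c/\rho_1&-\tilde c/\rho_2\\ (a-\lambda_1)/\rho_1&(a-\lambda_2)/\rho_2\end{bmatrix}$; with $\tilde{\mathbf B}$ the $\{k,l\}$ principal $2\times2$ submatrix of $\tilde{\mathbf Q}_{\mathcal I}$, write $\tilde{\mathbf U}^\ast\tilde{\mathbf B}\tilde{\mathbf U}=\begin{bmatrix}x&\tilde z\\ \tilde z^\ast&y\end{bmatrix}$ and $\hat{\mathbf V}=\begin{bmatrix}1&\frac{\tilde z}{\lambda_2-\lambda_1}\varepsilon\\ \frac{\tilde z^\ast}{\lambda_1-\lambda_2}\varepsilon&1\end{bmatrix}$. $J_{\hat{\mathbf Q}}(k,l)$ is the $n\times n$ identity with its $\{k,l\}$ rows/columns block replaced by $\tilde{\mathbf U}\hat{\mathbf V}$. Algorithm 1 (accuracy $\epsilon>0$): set $\hat{\mathbf Q}^{(0)}=\hat{\mathbf Q}$. At iteration $t=0,1,2,\dots$ compute $r^{(t)}=\max_{i<j}|(\tilde{\mathbf Q}^{(t)}_{st})_{ij}|$; if $r^{(t)}<\epsilon$ stop; otherwise choose $(k,l)$, $k<l$, attaining this maximum and set $\hat{\mathbf Q}^{(t+1)}=J_{\hat{\mathbf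 Q}^{(t)}}(k,l)^\ast\hat{\mathbf Q}^{(t)}J_{\hat{\mathbf Q}^{(t)}}(k,l)$. *)

From HB Require Import structures.
From mathcomp Require Import all_boot all_order all_algebra all_fingroup.
From mathcomp Require Import reals.
Set Implicit Arguments. Unset Strict Implicit. Unset Printing Implicit Defensive.
Import Order.TTheory GRing.Theory Num.Theory.
Local Open Scope ring_scope.

Section Quat.
Variable R : realType.

Record quat := Quat { qre : R; qi : R; qj : R; qk : R }.

Definition qzero : quat := Quat 0 0 0 0.
Definition qone : quat := Quat 1 0 0 0.
Definition qreal (r : R) : quat := Quat r 0 0 0.
Definition qadd (p q : quat) : quat :=
  Quat (qre p + qre q) (qi p + qi q) (qj p + qj q) (qk p + qk q).
Definition qscale (r : R) (q : quat) : quat :=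
  Quat (r * qre q) (r * qi q) (r * qj q) (r * qk q).
Definition qmul (p q : quat) : quat :=
  Quat (qre p * qre q - qi p * qi q - qj p * qj q - qk p * qk q)
       (qre p * qi q + qi p * qre q + qj p * qk q - qk p * qj q)
       (qre p * qj q - qi p * qk q + qj p * qre q + qk p * qi q)
       (qre p * qk q + qi p * qj q - qj p * qi q + qk p * qre q).
Definition qconj (q : quat) : quat := Quat (qre q) (- qi q) (- qj q) (- qk q).
Definition qnorm2 (q : quat) : R := qre q ^+ 2 + qi q ^+ 2 + qj q ^+ 2 + qk q ^+ 2.
Definition qabs (q : quat) : R := Num.sqrt (qnorm2 q).

Definition qmxmul {m n p} (A : 'M[quat]_(m, n)) (B : 'M[quat]_(n, p))
  : 'M[quat]_(m, p) :=
  \matrix_(i, j) \big[qadd/qzero]_(k < n) qmul (A i k) (B k j).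
Definition qmxadd {m n} (A B : 'M[quat]_(m, n)) : 'M[quat]_(m, n) :=
  \matrix_(i, j) qadd (A i j) (B i j).
Definition qmxct {m n} (A : 'M[quat]_(m, n)) : 'M[quat]_(n, m) :=
  \matrix_(i, j) qconj (A j i).
Definition qmx1 {n} : 'M[quat]_n := \matrix_(i, j) if i == j then qone else qzero.
Definition qmxdiag {n} (d : 'I_n -> R) : 'M[quat]_n :=
  \matrix_(i, j) if i == j then qreal (d i) else qzero.
Definition qhermitian {n} (A : 'M[quat]_n) : Prop := qmxct A = A.
Definition qunitary {n} (U : 'M[quat]_n) : Prop := qmxmul (qmxct U) U = qmx1.

(** [mu] lists the (real) eigenvalues of the quaternion Hermitian matrix [A],
    with multiplicity: A is unitarily diagonalised as U^* A U = diag(mu). *)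
Definition qeigenvalues {n} (A : 'M[quat]_n) (mu : 'I_n -> R) : Prop :=
  exists U : 'M[quat]_n, qunitary U /\ qmxmul (qmxct U) (qmxmul A U) = qmxdiag mu.

(** Dual quaternion matrices Q = Q_st + Q_I eps *)
Record dqmx (n : nat) := DQMx { dst : 'M[quat]_n; dI : 'M[quat]_n }.

Definition dqmxmul {n} (P Q : dqmx n) : dqmx n :=
  DQMx (qmxmul (dst P) (dst Q))
       (qmxadd (qmxmul (dst P) (dI Q)) (qmxmul (dI P) (dst Q))).
Definition dqmxct {n} (P : dqmx n) : dqmx n := DQMx (qmxct (dst P)) (qmxct (dI P)).
Definition dqhermitian {n} (P : dqmx n) : Prop := dqmxct P = P.

Definition offmax {n} (A : 'M[quat]_n) : R :=
  \big[Num.max/0]_(i < n) \big[Num.max/0]_(j < n | (i < j)%N) qabs (A i j).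

Section Givens.
Variables (n : nat) (Q : dqmx n) (k l : 'I_n).

Definition giv_a : R := qre (dst Q k k).
Definition giv_b : R := qre (dst Q l l).
Definition giv_c : quat := dst Q k l.
(** roots of (a-x)(b-x) = |c|^2, lambda_{1,2} = (a+b +- sqrt((a-b)^2+4|c|^2))/2 *)
Definition giv_disc : R := Num.sqrt ((giv_a - giv_b) ^+ 2 + 4 * qnorm2 giv_c).
Definition giv_l1 : R := (giv_a + giv_b + giv_disc) / 2.
Definition giv_l2 : R := (giv_a + giv_b - giv_disc) / 2.
Definition giv_rho (lam : R) : R := Num.sqrt ((giv_a - lam) ^+ 2 + qnorm2 giv_c).

Definition mx2 (x11 x12 x21 x22 : quat) : 'M[quat]_2 :=
  \matrix_(i, j) if i == ord0 then (if j == ord0 then x11 else x12)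
                 else (if j == ord0 then x21 else x22).

Definition giv_U : 'M[quat]_2 :=
  mx2 (qscale (- (giv_rho giv_l1)^-1) giv_c) (qscale (- (giv_rho giv_l2)^-1) giv_c)
      (qreal ((giv_a - giv_l1) / giv_rho giv_l1)) (qreal ((giv_a - giv_l2) / giv_rho giv_l2)).

Definition kl (i : 'I_2) : 'I_n := if i == ord0 then k else l.
Definition giv_B : 'M[quat]_2 := \matrix_(i, j) dI Q (kl i) (kl j).
Definition giv_z : quat := (qmxmul (qmxct giv_U) (qmxmul giv_B giv_U)) ord0 ord_max.

(** V = 1 + V_I eps *)
Definition giv_VI : 'M[quat]_2 :=
  mx2 qzero (qscale ((giv_l2 - giv_l1)^-1) giv_z)
      (qscale ((giv_l1 - giv_l2)^-1) (qconj giv_z)) qzero.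
(** U V = U + (U V_I) eps *)
Definition giv_UV : dqmx 2 := DQMx giv_U (qmxmul giv_U giv_VI).

Definition idx2 (i : 'I_n) : 'I_2 := if i == k then ord0 else ord_max.
Definition inkl (i : 'I_n) : bool := (i == k) || (i == l).

Definition givens : dqmx n :=
  DQMx (\matrix_(i, j) if inkl i && inkl j then dst giv_UV (idx2 i) (idx2 j)
                       else qmx1 i j)
       (\matrix_(i, j) if inkl i && inkl j then dI giv_UV (idx2 i) (idx2 j)
                       else qzero).
End Givens.

(** Qs is a run of Algorithm 1 on Q with accuracy eps: at each iteration where
    the algorithm does not stop, Qs (t+1) = J^* Qs t J for some maximising
    pair k < l. (After stopping, Qs is unconstrained.) *)
Definition alg1_run {n} (Q : dqmx n) (eps : R) (Qs : nat -> dqmx n) : Prop :=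
  Qs 0%N = Q /\
  forall t : nat, eps <= offmax (dst (Qs t)) ->
    exists k l : 'I_n, (k < l)%N /\ qabs (dst (Qs t) k l) = offmax (dst (Qs t)) /\
      Qs t.+1 = dqmxmul (dqmxct (givens (Qs t) k l)) (dqmxmul (Qs t) (givens (Qs t) k l)).

End Quat.

(* Only standard parts matter: the standard part of J^* Q J is J_st^* Q_st J_st,
   and J_st is the identity with its {k,l} block replaced by a 2x2 unitary whose
   columns are eigenvectors of the block [a c; c^* b] of Q_st.  This similarity
   preserves the Frobenius norm and turns a, b into the roots l1, l2, where
   l1^2 + l2^2 = a^2 + b^2 + 2|c|^2; so the off-diagonal mass drops by
   2|c|^2 >= 2 eps^2 per step, which bounds the number of steps.
   The final iterate D is unitarily similar to Q_st.  Subspaces of dimensions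
   n - i + 1 and i meet nontrivially (an underdetermined homogeneous system over
   a division ring has a nonzero solution), which gives a Courant-Fischer
   comparison of mu_i with the i-th largest diagonal entry of D up to the
   off-diagonal error |y^* D y - sum_j d_j |y_j|^2| <= (n - 1) r |y|^2.
   Hence |mu_i - d_i| <= (n - 1) r < sqrt (n (n - 1)) eps. *)

From HB Require Import structures.
From mathcomp Require Import all_boot all_order all_algebra all_fingroup.
From mathcomp Require Import reals.
From mathcomp.algebra_tactics Require Import ring lra.
Import Order.TTheory GRing.Theory Num.Theory.
Local Open Scope ring_scope.

Set Implicit Arguments. Unset Strict Implicit. Unset Printing Implicit Defensive.

Lemma sum_ord2 (V : nmodType) (F : 'I_2 -> V) : \sum_i F i = F ord0 + F ord_max.
Proof. by rewrite big_ord_recl big_ord1; congr (_ + F _); apply: val_inj. Qed.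

Lemma card_le_ge n (i : 'I_n) :
  (#|[set j : 'I_n | (j <= i)%N]| + #|[set j : 'I_n | (i <= j)%N]|)%N = n.+1.
Proof.
rewrite -cardsUI.
have -> : [set j : 'I_n | (j <= i)%N] :|: [set j : 'I_n | (i <= j)%N] = setT.
  by apply/setP => j; rewrite !inE leq_total.
have -> : [set j : 'I_n | (j <= i)%N] :&: [set j : 'I_n | (i <= j)%N] = [set i].
  by apply/setP => j; rewrite !inE -eqn_leq.
by rewrite cardsT card_ord cards1 addn1.
Qed.

Section WeightedSums.
Variables (R : numDomainType) (I : finType) (c w : I -> R) (X : {set I}) (m : R).
Hypotheses (w_ge0 : forall j, 0 <= w j) (w_supp : forall j, j \notin X -> w j = 0).

Lemma sum_weighted_le : {in X, forall j, c j <= m} -> \sum_j c j * w j <= m * \sum_j w j.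
Proof.
move=> cX; rewrite mulr_sumr; apply: ler_sum => j _.
by have [/cX|/w_supp->] := boolP (j \in X); [apply: ler_wpM2r | rewrite !mulr0].
Qed.

Lemma sum_weighted_ge : {in X, forall j, m <= c j} -> m * \sum_j w j <= \sum_j c j * w j.
Proof.
move=> cX; rewrite mulr_sumr; apply: ler_sum => j _.
by have [/cX|/w_supp->] := boolP (j \in X); [apply: ler_wpM2r | rewrite !mulr0].
Qed.
End WeightedSums.

Lemma mul_predn_lt_sqrt (R : rcfType) (n : nat) (m eps : R) : (2 <= n)%N ->
  0 <= m -> m < eps -> m * (n%:R - 1) < Num.sqrt (n%:R * (n%:R - 1)) * eps.
Proof.
move=> n2 m0 m_eps; have n1_gt0 : 0 < n%:R - 1 :> R by rewrite subr_gt0 ltr1n.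
apply: lt_le_trans (_ : eps * (n%:R - 1) <= _); first by rewrite ltr_pM2r.
rewrite mulrC ler_wpM2r ?(le_trans m0 (ltW m_eps)) //.
rewrite {1}(_ : n%:R - 1 = Num.sqrt ((n%:R - 1) ^+ 2)); last first.
  by rewrite sqrtr_sqr ger0_norm ?ltW.
by rewrite ler_sqrt ?mulr_gt0 ?ltr0n ?(leq_trans _ n2) //; nra.
Qed.

(** * Linear algebra over a division ring *)

Section DivisionRingKernel.
Variables (F : unitRingType) (I : finType).
Hypothesis unitF : forall x : F, x != 0 -> x \is a GRing.unit.

Lemma underdetermined_kernel m (A : 'I_m -> I -> F) (S : {set I}) : (m < #|S|)%N ->
  exists2 z : I -> F, exists k, z k != 0 &
    (forall k, k \notin S -> z k = 0) /\ forall r, \sum_k A r k * z k = 0.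
Proof.
elim: m A S => [|m IH] A S hS.
  have [k0 k0S] : exists k0, k0 \in S by apply/set0Pn; rewrite -card_gt0.
  exists (fun k => if k == k0 then 1 else 0); first by exists k0; rewrite eqxx oner_neq0.
  by split=> [k|[]//]; case: eqP => // ->; rewrite k0S.
have [k0 /andP [k0S p0]|A0] := pickP (fun k => (k \in S) && (A ord0 k != 0)); last first.
  have [z nz_z [zS zA]] := IH (fun r => A (lift ord0 r)) S (ltnW hS).
  exists z => //; split=> // r; have [r' ->|->] := unliftP ord0 r; first exact: zA.
  apply: big1 => k _; have [kS|/zS->] := boolP (k \in S); last by rewrite mulr0.
  by move: (A0 k); rewrite kS => /negbFE/eqP ->; rewrite mul0r.
(* Gaussian elimination of the unknown k0 using the pivot A ord0 k0 *)
set p := A ord0 k0.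
pose A' r k := A (lift ord0 r) k - A (lift ord0 r) k0 * p^-1 * A ord0 k.
have hS' : (m < #|S :\ k0|)%N by rewrite (cardsD1 k0) k0S in hS.
have [z [k1 zk1] [zS zA']] := IH A' (S :\ k0) hS'.
have zk0 : z k0 = 0 by apply: zS; rewrite !inE eqxx.
pose w := - (p^-1 * \sum_k A ord0 k * z k).
exists (fun k => if k == k0 then w else z k).
  by exists k1; case: (k1 =P k0) zk1 => [->|//]; rewrite zk0 eqxx.
split=> [k kS|r].
  by case: (k =P k0) kS => [->|/eqP k0k kS]; rewrite ?k0S // zS // !inE k0k.
have -> : \sum_k A r k * (if k == k0 then w else z k) = \sum_k A r k * z k + A r k0 * w.
  rewrite (bigD1 k0) //= eqxx [in RHS](bigD1 k0) //= zk0 mulr0 add0r addrC.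
  by congr (_ + _); apply: eq_bigr => k /negPf ->.
rewrite /w mulrN mulrA; have [r' ->|->] := unliftP ord0 r; last first.
  by rewrite divrr ?unitF // mul1r subrr.
move: (zA' r'); rewrite /A'; under eq_bigr => k _ do rewrite mulrBl.
rewrite sumrB mulr_sumr => /eqP; rewrite subr_eq0 => /eqP ->.
by rewrite -sumrB big1 // => k _; rewrite mulrA subrr.
Qed.
End DivisionRingKernel.

Section DivisionRingMatrices.
Variable F : unitRingType.
Hypothesis unitF : forall x : F, x != 0 -> x \is a GRing.unit.

(* A kernel vector [x] of [V] together with the columns of [U] gives [n + 1]
   unknowns for [n] equations; applying [V] to a dependency kills the [U]-part. *)
Lemma rinv_mx_inj n (V U : 'M[F]_n) (x : 'cV[F]_n) :
  V *m U = 1%:M -> V *m x = 0 -> x = 0.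
Proof.
move=> VU1 Vx0.
pose A r (o : 'I_n + 'I_1) := if o is inl j then U r j else x r 0.
have [|z [o zo] [_ zA]] := underdetermined_kernel unitF A (S := setT).
  by rewrite cardsT card_sum !card_ord addn1.
pose y : 'cV_n := \col_j z (inl j); set w := z (inr ord0).
have Uyx : U *m y + x *m w%:M = 0.
  apply/matrixP => r c; rewrite ord1 !mxE big_ord1 !mxE -[RHS](zA r) big_sumType big_ord1.
  by rewrite mulr1n; congr (_ + _); apply: eq_bigr => j _; rewrite mxE.
have y0 : y = 0.
  by move/(congr1 (mulmx V)): Uyx; rewrite mulmxDr !mulmxA VU1 Vx0 mul1mx mul0mx addr0 mulmx0.
have w0 : w != 0.
  case: o zo => [j|i]; first by have /matrixP/(_ j 0) := y0; rewrite !mxE => ->; rewrite eqxx.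
  by rewrite ord1.
apply/matrixP => r c; rewrite ord1 mxE.
have /matrixP/(_ r 0) := Uyx; rewrite y0 mulmx0 add0r !mxE big_ord1 !mxE mulr1n => xw0.
by rewrite -[x r 0]mulr1 -(divrr (unitF w0)) mulrA xw0 mul0r.
Qed.

Lemma mulmx1C_divring n (V U : 'M[F]_n) : V *m U = 1%:M -> U *m V = 1%:M.
Proof.
move=> VU1; apply/eqP; rewrite -subr_eq0; apply/eqP/matrixP => i j.
have := rinv_mx_inj (x := col j (U *m V - 1%:M)) VU1.
rewrite colE mulmxA mulmxBr mulmxA VU1 mul1mx mulmx1 subrr mul0mx => /(_ erefl).
by rewrite -colE => /matrixP/(_ i 0); rewrite !mxE.
Qed.
End DivisionRingMatrices.

(** * Quaternions and quaternion matrices *)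

Section QuaternionRing.
Variable R : realType.
Local Notation quat := (quat R).

Lemma quatP (p q : quat) :
  qre p = qre q -> qi p = qi q -> qj p = qj q -> qk p = qk q -> p = q.
Proof. by case: p; case: q => /= ? ? ? ? ? ? ? ? -> -> -> ->. Qed.

Ltac quat_ring := repeat match goal with q : quat |- _ => case: q end;
  move=> *; apply: quatP => /=; ring.

Definition quat_tuple (q : quat) := (qre q, qi q, qj q, qk q).
Definition tuple_quat (t : R * R * R * R) : quat :=
  let: (a, b, c, d) := t in Quat a b c d.
Lemma quat_tupleK : cancel quat_tuple tuple_quat. Proof. by case. Qed.
HB.instance Definition _ := Choice.copy quat (can_type quat_tupleK).

Definition qopp (q : quat) : quat := Quat (- qre q) (- qi q) (- qj q) (- qk q).

Lemma qaddA : associative (@qadd R). Proof. by move=> *; quat_ring. Qed.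
Lemma qaddC : commutative (@qadd R). Proof. by move=> *; quat_ring. Qed.
Lemma qadd0 : left_id (qzero R) (@qadd R). Proof. by move=> *; quat_ring. Qed.
Lemma qaddN : left_inverse (qzero R) qopp (@qadd R). Proof. by move=> *; quat_ring. Qed.
HB.instance Definition _ := GRing.isZmodule.Build quat qaddA qaddC qadd0 qaddN.

Lemma qmulA : associative (@qmul R). Proof. by move=> *; quat_ring. Qed.
Lemma qmul1 : left_id (qone R) (@qmul R). Proof. by move=> *; quat_ring. Qed.
Lemma qmulr1 : right_id (qone R) (@qmul R). Proof. by move=> *; quat_ring. Qed.
Lemma qmulDl : left_distributive (@qmul R) (@qadd R). Proof. by move=> *; quat_ring. Qed.
Lemma qmulDr : right_distributive (@qmul R) (@qadd R). Proof. by move=> *; quat_ring. Qed.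
Lemma qone_neq0 : qone R != qzero R.
Proof. by apply/eqP => -[] /eqP; rewrite oner_eq0. Qed.
HB.instance Definition _ :=
  GRing.Zmodule_isNzRing.Build quat qmulA qmul1 qmulr1 qmulDl qmulDr qone_neq0.

Lemma qconjM (p q : quat) : qconj (p * q) = qconj q * qconj p. Proof. by quat_ring. Qed.
Lemma qconjD (p q : quat) : qconj (p + q) = qconj p + qconj q. Proof. by quat_ring. Qed.
Lemma qconjK (p : quat) : qconj (qconj p) = p. Proof. by quat_ring. Qed.
Lemma qconj0 : qconj 0 = 0 :> quat. Proof. by apply: quatP => /=; rewrite ?oppr0. Qed.
Lemma qconj1 : qconj 1 = 1 :> quat. Proof. by apply: quatP => /=; rewrite ?oppr0. Qed.
Lemma qconj_sum I (r : seq I) (P : pred I) (F : I -> quat) :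
  qconj (\sum_(i <- r | P i) F i) = \sum_(i <- r | P i) qconj (F i).
Proof. by elim/big_rec2: _ => [|i x y _ <-]; rewrite ?qconj0 ?qconjD. Qed.

Lemma qre_sum I (r : seq I) (P : pred I) (F : I -> quat) :
  qre (\sum_(i <- r | P i) F i) = \sum_(i <- r | P i) qre (F i).
Proof. by elim/big_rec2: _ => [|i x y _ <-]. Qed.

Lemma qreal_mul (a : R) (q : quat) : qreal a * q = qscale a q.
Proof. by case: q => *; apply: quatP => /=; ring. Qed.
Lemma qrealM (a b : R) : qreal (a * b) = qreal a * qreal b.
Proof. by rewrite qreal_mul; apply: quatP => /=; rewrite ?mulr0. Qed.
Lemma qrealC (a : R) (q : quat) : qreal a * q = q * qreal a.
Proof. by case: q => *; apply: quatP => /=; ring. Qed.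

Lemma qconj_mull (p : quat) : qconj p * p = qreal (qnorm2 p).
Proof. by case: p => *; apply: quatP => /=; rewrite /qnorm2 /=; ring. Qed.
Lemma qconj_mulr (p : quat) : p * qconj p = qreal (qnorm2 p).
Proof. by case: p => *; apply: quatP => /=; rewrite /qnorm2 /=; ring. Qed.

Lemma qnorm2M (p q : quat) : qnorm2 (p * q) = qnorm2 p * qnorm2 q.
Proof. by case: p; case: q => /= *; rewrite /qnorm2 /=; ring. Qed.
Lemma qnorm2_conj (p : quat) : qnorm2 (qconj p) = qnorm2 p.
Proof. by rewrite /qnorm2 /= !sqrrN. Qed.
Lemma qnorm2_real (x : R) : qnorm2 (qreal x) = x ^+ 2.
Proof. by rewrite /qnorm2 /= expr0n /= !addr0. Qed.
Lemma qnorm2_ge0 (p : quat) : 0 <= qnorm2 p.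
Proof. by rewrite /qnorm2 !addr_ge0 ?sqr_ge0. Qed.
Lemma qnorm2_eq0 (p : quat) : (qnorm2 p == 0) = (p == 0).
Proof.
apply/eqP/eqP => [|->]; last by rewrite qnorm2_real expr0n.
case: p => a b c d; rewrite /qnorm2 /= => h.
by apply: quatP => /=; apply/eqP; rewrite -sqrf_eq0; apply/eqP; nra.
Qed.
Lemma qnorm20 : qnorm2 (0 : quat) = 0.
Proof. by apply/eqP; rewrite qnorm2_eq0. Qed.
Lemma qnorm2_gt0 (p : quat) : (0 < qnorm2 p) = (p != 0).
Proof. by rewrite lt0r qnorm2_eq0 qnorm2_ge0 andbT. Qed.

Lemma qabs_ge0 (p : quat) : 0 <= qabs p. Proof. exact: sqrtr_ge0. Qed.
Lemma sqr_qabs (p : quat) : qabs p ^+ 2 = qnorm2 p.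
Proof. by rewrite sqr_sqrtr // qnorm2_ge0. Qed.
Lemma qabsM (p q : quat) : qabs (p * q) = qabs p * qabs q.
Proof. by rewrite /qabs qnorm2M sqrtrM // qnorm2_ge0. Qed.
Lemma qabs_conj (p : quat) : qabs (qconj p) = qabs p.
Proof. by rewrite /qabs qnorm2_conj. Qed.
Lemma qre_le_qabs (p : quat) : `|qre p| <= qabs p.
Proof.
rewrite -ler_sqr ?nnegrE ?qabs_ge0 // sqr_qabs real_normK ?num_real //.
by rewrite /qnorm2 -!addrA lerDl !addr_ge0 ?sqr_ge0.
Qed.

Definition qinv (p : quat) : quat := qscale (qnorm2 p)^-1 (qconj p).

Lemma qmulVq : {in [pred p | p != 0], left_inverse 1 qinv *%R}.
Proof.
move=> p; rewrite inE -qnorm2_eq0 => p0.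
by rewrite /qinv -qreal_mul -mulrA qconj_mull -qrealM mulVf.
Qed.
Lemma qmulqV : {in [pred p | p != 0], right_inverse 1 qinv *%R}.
Proof.
move=> p; rewrite inE -qnorm2_eq0 => p0.
by rewrite /qinv -qreal_mul qrealC mulrA qconj_mulr -qrealM divff.
Qed.
Lemma qunitP (p q : quat) : q * p = 1 /\ p * q = 1 -> p != 0.
Proof. by case=> qp1 _; apply: contra_eq_neq qp1 => ->; rewrite mulr0 eq_sym oner_neq0. Qed.
Lemma qinv_out : {in [predC [pred p : quat | p != 0]], qinv =1 id}.
Proof.
move=> p; rewrite !inE negbK => /eqP ->.
by apply: quatP; rewrite /= ?oppr0 mulr0.
Qed.
HB.instance Definition _ :=
  GRing.NzRing_hasMulInverse.Build quat qmulVq qmulqV qunitP qinv_out.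

Lemma quat_unit (p : quat) : p != 0 -> p \is a GRing.unit. Proof. by []. Qed.
End QuaternionRing.

Section QuaternionMatrices.
Variable R : realType.
Local Notation quat := (quat R).

Lemma qmxmulE m n p (A : 'M[quat]_(m, n)) (B : 'M[quat]_(n, p)) : qmxmul A B = A *m B.
Proof. by apply/matrixP => i j; rewrite !mxE. Qed.
Lemma qmx1E n : @qmx1 R n = 1%:M :> 'M[quat]_n.
Proof. by apply/matrixP => i j; rewrite !mxE; case: eqP. Qed.

Lemma qmxctM m n p (A : 'M[quat]_(m, n)) (B : 'M[quat]_(n, p)) :
  qmxct (A *m B) = qmxct B *m qmxct A.
Proof.
apply/matrixP => i j; rewrite !mxE qconj_sum; apply: eq_bigr => k _.
by rewrite !mxE qconjM.
Qed.
Lemma qmxctK m n (A : 'M[quat]_(m, n)) : qmxct (qmxct A) = A.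
Proof. by apply/matrixP => i j; rewrite !mxE qconjK. Qed.
Lemma qmxct1 n : qmxct 1%:M = 1%:M :> 'M[quat]_n.
Proof. by apply/matrixP => i j; rewrite !mxE eq_sym; case: eqP; rewrite ?qconj1 ?qconj0. Qed.

Lemma qmxct_mulmx_entry m n p (A : 'M[quat]_(m, n)) (Y : 'M[quat]_(m, p)) i j :
  (qmxct A *m Y) i j = qconj ((qmxct Y *m A) j i).
Proof. by rewrite -[in LHS](qmxctK Y) -qmxctM mxE. Qed.

Lemma qunitaryE n (U : 'M[quat]_n) : qunitary U <-> qmxct U *m U = 1%:M.
Proof. by rewrite /qunitary qmxmulE qmx1E. Qed.

Lemma qunitaryM n (U V : 'M[quat]_n) :
  qmxct U *m U = 1%:M -> qmxct V *m V = 1%:M -> qmxct (U *m V) *m (U *m V) = 1%:M.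
Proof. by move=> hU hV; rewrite qmxctM -mulmxA (mulmxA (qmxct U)) hU mul1mx. Qed.

Lemma qhermitian_conj n (A V : 'M[quat]_n) :
  qhermitian A -> qhermitian (qmxct V *m (A *m V)).
Proof. by rewrite /qhermitian => hA; rewrite !qmxctM qmxctK hA mulmxA. Qed.

Lemma offmax_ge0 n (A : 'M[quat]_n) : 0 <= offmax A.
Proof. exact: bigmax_ge_id. Qed.

Section Hermitian.
Variables (n : nat) (A : 'M[quat]_n).
Hypothesis hA : qhermitian A.

Lemma qhermitian_sym i j : A j i = qconj (A i j).
Proof. by rewrite -[in LHS]hA mxE. Qed.

Lemma qhermitian_diag i : A i i = qreal (qre (A i i)).
Proof.
have := qhermitian_sym i i; case: (A i i) => q0 q1 q2 q3 [] *.
by apply: quatP => //=; lra.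
Qed.

Lemma qabs_le_offmax i j : i != j -> qabs (A i j) <= offmax A.
Proof.
have le_offmax (p q : 'I_n) : (p < q)%N -> qabs (A p q) <= offmax A.
  by move=> pq; apply: le_trans (le_bigmax _ _ p); apply: (le_bigmax_cond _ _ pq).
rewrite neq_ltn => /orP [] ij; first exact: le_offmax.
by rewrite qhermitian_sym qabs_conj le_offmax.
Qed.
End Hermitian.
End QuaternionMatrices.

Section UnitarySimilarity.
Variable R : realType.
Local Notation quat := (quat R).
Variable n : nat.

Definition qunitarily_similar (A B : 'M[quat]_n) :=
  exists2 V : 'M[quat]_n, qmxct V *m V = 1%:M & B = qmxct V *m (A *m V).

Lemma qunitarily_similar_refl A : qunitarily_similar A A.
Proof. by exists 1%:M; rewrite ?qmxct1 ?mulmx1 ?mul1mx. Qed.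

Lemma qunitarily_similar_step A B J : qunitarily_similar A B ->
  qmxct J *m J = 1%:M -> qunitarily_similar A (qmxct J *m (B *m J)).
Proof.
case=> V V1 ->{B} J1; exists (V *m J); first exact: qunitaryM.
by rewrite qmxctM !mulmxA.
Qed.

Lemma qunitarily_similar_hermitian A B :
  qhermitian A -> qunitarily_similar A B -> qhermitian B.
Proof. by move=> hA [V _ ->]; exact: qhermitian_conj. Qed.
End UnitarySimilarity.

(** * The Givens matrix *)

Section Embed2.
Variable R : realType.
Local Notation quat := (quat R).
Variables (n : nat) (k l : 'I_n).
Hypothesis neq_kl : k != l.

Definition embed2 (U : 'M[quat]_2) : 'M[quat]_n :=
  \matrix_(i, j) if inkl k l i && inkl k l j then U (idx2 k i) (idx2 k j)
                 else @qmx1 R n i j.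

Lemma inkl_kl p : inkl k l (kl k l p).
Proof. by rewrite /inkl /kl; case: ifP; rewrite eqxx ?orbT. Qed.

Lemma idx2K p : idx2 k (kl k l p) = p.
Proof.
case: p => -[|[|//]] hp; apply/val_inj; rewrite /idx2 /kl /=.
  by rewrite eqxx.
by rewrite eq_sym (negPf neq_kl).
Qed.

Lemma klK i : inkl k l i -> kl k l (idx2 k i) = i.
Proof.
rewrite /kl /idx2 => /orP[] /eqP->; rewrite ?eqxx //.
by rewrite [l == k]eq_sym (negPf neq_kl).
Qed.

Lemma sum_inkl (V : nmodType) (F : 'I_n -> V) :
  \sum_i F i = \sum_p F (kl k l p) + \sum_(i | ~~ inkl k l i) F i.
Proof.
rewrite (bigID (inkl k l)) /= sum_ord2; congr (_ + _).
rewrite (bigD1 k) ?/inkl ?eqxx //= (bigD1 l) ?eqxx ?orbT ?(eq_sym l) //=.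
rewrite big1 ?addr0 ?addrA /kl ?eqxx //.
by move=> i /andP[/andP[/orP[]/eqP-> ki] li]; rewrite ?eqxx in ki li.
Qed.

Lemma kl_inj : injective (kl k l). Proof. exact: can_inj idx2K. Qed.

Lemma eq_kl_out i p : ~~ inkl k l i -> (i == kl k l p) = false.
Proof. by move=> ikl; apply: contraNF ikl => /eqP->; exact: inkl_kl. Qed.

Lemma embed2E U i j :
  embed2 U i j = if inkl k l i && inkl k l j then U (idx2 k i) (idx2 k j) else (i == j)%:R.
Proof. by rewrite mxE qmx1E mxE. Qed.

Lemma embed2_kl U p q : embed2 U (kl k l p) (kl k l q) = U p q.
Proof. by rewrite embed2E !inkl_kl !idx2K. Qed.

Lemma mulmx_embed2_kl m U (X : 'M[quat]_(m, n)) i q :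
  (X *m embed2 U) i (kl k l q) = \sum_p X i (kl k l p) * U p q.
Proof.
rewrite mxE sum_inkl; under eq_bigr do rewrite embed2_kl.
rewrite [X in _ + X]big1 ?addr0 // => j jkl.
by rewrite embed2E (negPf jkl) eq_kl_out // mulr0.
Qed.

Lemma mulmx_embed2_out m U (X : 'M[quat]_(m, n)) i j :
  ~~ inkl k l j -> (X *m embed2 U) i j = X i j.
Proof.
move=> jkl; rewrite mxE sum_inkl big1 ?add0r => [|p _]; last first.
  by rewrite embed2E (negPf jkl) andbF eq_sym eq_kl_out // mulr0.
rewrite (bigD1 j) //= big1 ?addr0 => [|i' /andP[/negPf i'kl /negPf i'j]].
  by rewrite embed2E (negPf jkl) eqxx mulr1.
by rewrite embed2E i'kl i'j mulr0.
Qed.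

Lemma ct_embed2_mulmx_kl m U (Y : 'M[quat]_(n, m)) p j :
  (qmxct (embed2 U) *m Y) (kl k l p) j = \sum_r qconj (U r p) * Y (kl k l r) j.
Proof.
rewrite qmxct_mulmx_entry mulmx_embed2_kl qconj_sum; apply: eq_bigr => r _.
by rewrite qconjM mxE qconjK.
Qed.

Lemma ct_embed2_mulmx_out m U (Y : 'M[quat]_(n, m)) i j :
  ~~ inkl k l i -> (qmxct (embed2 U) *m Y) i j = Y i j.
Proof. by move=> ikl; rewrite qmxct_mulmx_entry mulmx_embed2_out // mxE qconjK. Qed.

Lemma embed2_ct U : qmxct (embed2 U) = embed2 (qmxct U).
Proof.
apply/matrixP => i j; rewrite mxE !embed2E andbC mxE; case: ifP => // _.
by rewrite eq_sym; case: eqP; rewrite ?qconj1 ?qconj0.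
Qed.

Lemma embed2_mul U V : embed2 U *m embed2 V = embed2 (U *m V).
Proof.
apply/matrixP => i j; have [jkl|jkl] := boolP (inkl k l j); last first.
  by rewrite mulmx_embed2_out // !embed2E (negPf jkl) !andbF.
rewrite -(klK jkl) mulmx_embed2_kl; have [ikl|ikl] := boolP (inkl k l i).
  by rewrite -(klK ikl) embed2_kl mxE; under eq_bigr do rewrite embed2_kl.
rewrite embed2E (negPf ikl) eq_kl_out // big1 // => p _.
by rewrite embed2E (negPf ikl) eq_kl_out // mul0r.
Qed.

Lemma embed2_1 : embed2 1%:M = 1%:M.
Proof.
apply/matrixP => i j; rewrite embed2E !mxE; case: ifP => [/andP[ikl jkl]|//].
by rewrite -{2}(klK ikl) -{2}(klK jkl) (inj_eq kl_inj).
Qed.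

Lemma embed2_unitary U : qmxct U *m U = 1%:M -> qmxct (embed2 U) *m embed2 U = 1%:M.
Proof. by move=> hU; rewrite embed2_ct embed2_mul hU embed2_1. Qed.

Lemma embed2_conj_kl U (A : 'M[quat]_n) p q :
  (qmxct (embed2 U) *m (A *m embed2 U)) (kl k l p) (kl k l q)
  = (qmxct U *m (mxsub (kl k l) (kl k l) A *m U)) p q.
Proof.
rewrite ct_embed2_mulmx_kl mxE; apply: eq_bigr => r _.
by rewrite mulmx_embed2_kl !mxE; congr (_ * _); apply: eq_bigr => s _; rewrite mxE.
Qed.

Lemma embed2_conj_out U (A : 'M[quat]_n) i j :
  ~~ inkl k l i -> ~~ inkl k l j -> (qmxct (embed2 U) *m (A *m embed2 U)) i j = A i j.
Proof. by move=> ikl jkl; rewrite ct_embed2_mulmx_out // mulmx_embed2_out. Qed.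
End Embed2.

Section GivensRotation.
Variable R : realType.
Variables (n : nat) (Q : dqmx R n) (k l : 'I_n).
Local Notation a := (giv_a Q k).
Local Notation b := (giv_b Q l).
Local Notation c := (giv_c Q k l).
Local Notation l1 := (giv_l1 Q k l).
Local Notation l2 := (giv_l2 Q k l).
Local Notation rho := (giv_rho Q k l).
Local Notation U := (giv_U Q k l).
Hypothesis c_neq0 : c != 0.

Lemma giv_disc_sqr : giv_disc Q k l ^+ 2 = (a - b) ^+ 2 + 4 * qnorm2 c.
Proof. by rewrite sqr_sqrtr // addr_ge0 ?sqr_ge0 // mulr_ge0 // qnorm2_ge0. Qed.

Lemma giv_l1_root : (a - l1) * (b - l1) = qnorm2 c.
Proof. have := giv_disc_sqr; rewrite /giv_l1; nra. Qed.

Lemma giv_l2_root : (a - l2) * (b - l2) = qnorm2 c.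
Proof. have := giv_disc_sqr; rewrite /giv_l2; nra. Qed.

Lemma giv_l1l2 : (a - l1) * (a - l2) = - qnorm2 c.
Proof. have := giv_disc_sqr; rewrite /giv_l1 /giv_l2; nra. Qed.

Lemma giv_sqr_sum : l1 ^+ 2 + l2 ^+ 2 = a ^+ 2 + b ^+ 2 + 2 * qnorm2 c.
Proof. have := giv_disc_sqr; rewrite /giv_l1 /giv_l2; lra. Qed.

Lemma giv_rho_sqr lam : rho lam ^+ 2 = (a - lam) ^+ 2 + qnorm2 c.
Proof. by rewrite sqr_sqrtr // addr_ge0 ?sqr_ge0 ?qnorm2_ge0. Qed.

Lemma giv_rho_normalized lam : rho lam ^-2 * ((a - lam) ^+ 2 + qnorm2 c) = 1.
Proof.
by rewrite -giv_rho_sqr mulVf // sqrf_eq0 gt_eqF // sqrtr_gt0 ltr_wpDl ?sqr_ge0 ?qnorm2_gt0.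
Qed.

Lemma giv_U_unitary : qmxct U *m U = 1%:M.
Proof.
apply/matrixP => p q; rewrite !mxE sum_ord2 !mxE.
have n1 := giv_rho_normalized l1; have n2 := giv_rho_normalized l2.
rewrite -!exprVn in n1 n2; move: (rho l1)^-1 (rho l2)^-1 n1 n2 => s1 s2 n1 n2.
have orth : s1 * s2 * ((a - l1) * (a - l2) + qnorm2 c) = 0.
  by rewrite giv_l1l2 addNr mulr0.
move: n1 n2 orth; rewrite /qnorm2; case: (giv_c Q k l) => c0 c1 c2 c3 /= n1 n2 orth.
by case: p q => -[|[|//]] ? [[|[|//]] ?]; apply: quatP => /=; lra.
Qed.

Hypothesis herm : qhermitian (dst Q).

Lemma giv_U_eigen :
  mxsub (kl k l) (kl k l) (dst Q) *m U = U *m mx2 (qreal l1) 0 0 (qreal l2).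
Proof.
have Akk : dst Q k k = qreal a := qhermitian_diag herm k.
have All : dst Q l l = qreal b := qhermitian_diag herm l.
have Alk : dst Q l k = qconj c := qhermitian_sym herm k l.
apply/matrixP => p q; rewrite !mxE !sum_ord2 !mxE.
have r1 : (rho l1)^-1 * ((a - l1) * (b - l1)) = (rho l1)^-1 * qnorm2 c by rewrite giv_l1_root.
have r2 : (rho l2)^-1 * ((a - l2) * (b - l2)) = (rho l2)^-1 * qnorm2 c by rewrite giv_l2_root.
move: (rho l1)^-1 (rho l2)^-1 r1 r2 => s1 s2; rewrite /qnorm2.
case: p q => -[|[|//]] ? [[|[|//]] ?]; rewrite /kl /= ?Akk ?All ?Alk /giv_c.
all: case: (dst Q k l) => c0 c1 c2 c3 /= r1 r2; apply: quatP => /=; lra.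
Qed.

Lemma giv_U_conj : qmxct U *m (mxsub (kl k l) (kl k l) (dst Q) *m U)
  = mx2 (qreal l1) 0 0 (qreal l2).
Proof. by rewrite giv_U_eigen mulmxA giv_U_unitary mul1mx. Qed.
End GivensRotation.

(** * Termination *)

Section FrobeniusNorm.
Variable R : realType.
Local Notation quat := (quat R).
Variable n : nat.
Implicit Types A J : 'M[quat]_n.

Definition fnorm2 A := \sum_i \sum_j qnorm2 (A i j).
Definition offnorm2 A := \sum_i \sum_(j | j != i) qnorm2 (A i j).

Lemma fnorm2_diag_off A : fnorm2 A = \sum_i qnorm2 (A i i) + offnorm2 A.
Proof. by rewrite -big_split; apply: eq_bigr => i _; rewrite (bigD1 i). Qed.

Lemma offnorm2_ge0 A : 0 <= offnorm2 A.
Proof. by do 2!apply: sumr_ge0 => ? _; apply: qnorm2_ge0. Qed.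

Lemma fnorm2_ct A : fnorm2 (qmxct A) = fnorm2 A.
Proof.
rewrite /fnorm2 exchange_big; apply: eq_bigr => i _; apply: eq_bigr => j _.
by rewrite mxE qnorm2_conj.
Qed.

Lemma fnorm2_trace A : fnorm2 A = \sum_i qre ((A *m qmxct A) i i).
Proof.
apply: eq_bigr => i _; rewrite mxE qre_sum; apply: eq_bigr => j _.
by rewrite mxE qconj_mulr.
Qed.

Lemma fnorm2_mulmx_unitary A J : J *m qmxct J = 1%:M -> fnorm2 (A *m J) = fnorm2 A.
Proof. by move=> JJ1; rewrite !fnorm2_trace qmxctM mulmxA -(mulmxA A) JJ1 mulmx1. Qed.

Lemma fnorm2_unitary_conj A J :
  qmxct J *m J = 1%:M -> fnorm2 (qmxct J *m (A *m J)) = fnorm2 A.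
Proof.
move=> /(mulmx1C_divring (@quat_unit R)) JJ1.
rewrite -[qmxct J *m _]qmxctK fnorm2_ct qmxctM qmxctK fnorm2_mulmx_unitary //.
by rewrite fnorm2_ct fnorm2_mulmx_unitary.
Qed.
End FrobeniusNorm.

Section JacobiStep.
Variable R : realType.
Variables (n : nat) (Q : dqmx R n) (k l : 'I_n).
Hypotheses (herm : qhermitian (dst Q)) (lt_kl : (k < l)%N) (c_neq0 : giv_c Q k l != 0).
Local Notation J := (dst (givens Q k l)).

Let neq_kl : k != l. Proof. by rewrite neq_ltn lt_kl. Qed.

Lemma givens_dst : J = embed2 k l (giv_U Q k l). Proof. by []. Qed.

Lemma givens_unitary : qmxct J *m J = 1%:M.
Proof. by rewrite givens_dst embed2_unitary // giv_U_unitary. Qed.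

Lemma offnorm2_givens :
  offnorm2 (qmxct J *m (dst Q *m J)) = offnorm2 (dst Q) - 2 * qnorm2 (giv_c Q k l).
Proof.
have := fnorm2_unitary_conj (dst Q) givens_unitary.
rewrite !fnorm2_diag_off !(sum_inkl neq_kl) !sum_ord2 givens_dst.
rewrite (eq_bigr (fun i => qnorm2 (dst Q i i))) => [|i ikl]; last first.
  by rewrite (embed2_conj_out neq_kl).
rewrite !(embed2_conj_kl neq_kl) (giv_U_conj c_neq0 herm) !mxE /= !qnorm2_real /kl /=.
rewrite (qhermitian_diag herm k) (qhermitian_diag herm l) !qnorm2_real.
have := giv_sqr_sum Q k l; rewrite /giv_a /giv_b; lra.
Qed.
End JacobiStep.

Section Algorithm1.
Variable R : realType.
Variables (n : nat) (Q : dqmx R n) (eps : R).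
Hypotheses (herm : qhermitian (dst Q)) (eps_gt0 : 0 < eps).

Lemma alg1_run_invariant Qs : alg1_run Q eps Qs ->
  forall t, (forall u, (u < t)%N -> eps <= offmax (dst (Qs u))) ->
  qunitarily_similar (dst Q) (dst (Qs t)) /\
  offnorm2 (dst (Qs t)) <= offnorm2 (dst Q) - 2 * t%:R * eps ^+ 2.
Proof.
case=> run0 run_step; elim=> [_|t IH running].
  by rewrite run0 mulr0n mulr0 mul0r subr0; split; [apply: qunitarily_similar_refl|].
have [simt offt] := IH (fun u ut => running u (ltnW ut)).
have [k [l [lt_kl [max_kl ->]]]] := run_step t (running t (ltnSn t)).
set A := Qs t in simt offt max_kl *.
have hermA : qhermitian (dst A) := qunitarily_similar_hermitian herm simt.
have eps_le_c : eps <= qabs (giv_c A k l) by rewrite /giv_c max_kl running.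
have c_neq0 : giv_c A k l != 0.
  by rewrite -qnorm2_gt0 -sqr_qabs exprn_gt0 // (lt_le_trans eps_gt0 eps_le_c).
have eps2_le_c : eps ^+ 2 <= qnorm2 (giv_c A k l).
  by rewrite -sqr_qabs lerXn2r ?nnegrE ?qabs_ge0 ?(ltW eps_gt0).
rewrite /= !qmxmulE; split; first exact/qunitarily_similar_step/givens_unitary.
by rewrite offnorm2_givens // -natr1; lra.
Qed.

Definition alg1_bound := (Num.truncn (offnorm2 (dst Q) / (2 * eps ^+ 2))).+1.

Lemma alg1_run_stops Qs : alg1_run Q eps Qs ->
  exists T, [/\ (T <= alg1_bound)%N,
    forall t, (t < T)%N -> eps <= offmax (dst (Qs t)) & offmax (dst (Qs T)) < eps].
Proof.
move=> run; set N := alg1_bound.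
have [|T stopT minT] := ex_minnP (P := fun t => (t == N) || (offmax (dst (Qs t)) < eps)).
  by exists N; rewrite eqxx.
have running t : (t < T)%N -> eps <= offmax (dst (Qs t)).
  move=> tT; rewrite leNgt; apply: contraTN tT => stop_t.
  by rewrite -leqNgt minT ?stop_t ?orbT.
exists T; split=> //; first by rewrite minT ?eqxx.
case/orP: stopT => [/eqP TN|//]; rewrite TN in running *; exfalso.
have [_ offN] := alg1_run_invariant run running.
have : offnorm2 (dst Q) < N%:R * (2 * eps ^+ 2).
  by rewrite -ltr_pdivrMr ?mulr_gt0 ?exprn_gt0 // real_truncnS_gt ?num_real.
have := offnorm2_ge0 (dst (Qs N)); lra.
Qed.
End Algorithm1.

(** * Diagonal entries versus eigenvalues *)

Section QuadraticForm.
Variable R : realType.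
Local Notation quat := (quat R).
Variable n : nat.
Implicit Types (M V : 'M[quat]_n) (y : 'cV[quat]_n).

Definition vnorm2 y := \sum_j qnorm2 (y j 0).
Definition qform M y := qre ((qmxct y *m (M *m y)) 0 0).

Lemma vnorm2_gt0 y j : y j 0 != 0 -> 0 < vnorm2 y.
Proof.
move=> yj; rewrite /vnorm2 (bigD1 j) //= ltr_pwDl ?qnorm2_gt0 //.
by apply: sumr_ge0 => i _; apply: qnorm2_ge0.
Qed.

Lemma vnorm2E y : vnorm2 y = qre ((qmxct y *m y) 0 0).
Proof. by rewrite mxE qre_sum; apply: eq_bigr => j _; rewrite mxE qconj_mull. Qed.

Lemma vnorm2_unitary V y : qmxct V *m V = 1%:M -> vnorm2 (V *m y) = vnorm2 y.
Proof. by move=> V1; rewrite !vnorm2E qmxctM -mulmxA (mulmxA (qmxct V)) V1 mul1mx. Qed.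

Lemma qform_mulmx M V y : qform M (V *m y) = qform (qmxct V *m (M *m V)) y.
Proof. by rewrite /qform qmxctM !mulmxA. Qed.

Lemma qformE M y : qform M y = \sum_j \sum_i qre (qconj (y j 0) * M j i * y i 0).
Proof.
rewrite /qform mxE qre_sum; apply: eq_bigr => j _; rewrite !mxE mulr_sumr qre_sum.
by apply: eq_bigr => i _; rewrite mulrA.
Qed.

Lemma qre_conj_real_mul (d : R) (p : quat) : qre (qconj p * qreal d * p) = d * qnorm2 p.
Proof. by rewrite -qrealC -mulrA qconj_mull -qrealM. Qed.

Lemma qform_diag (mu : 'I_n -> R) y : qform (qmxdiag mu) y = \sum_j mu j * qnorm2 (y j 0).
Proof.
rewrite qformE; apply: eq_bigr => j _; rewrite (bigD1 j) // big1 ?Monoid.mulm1.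
  by rewrite mxE eqxx; apply: qre_conj_real_mul.
by move=> i ij; rewrite mxE ifN 1?eq_sym // mulr0 mul0r.
Qed.

Lemma qre_conj_mul_le (p m q : quat) :
  `|qre (qconj p * m * q)| <= qabs m * ((qnorm2 p + qnorm2 q) / 2).
Proof.
apply: le_trans (qre_le_qabs _) _; rewrite !qabsM qabs_conj -!sqr_qabs.
have := sqr_ge0 (qabs p - qabs q); have := qabs_ge0 m; nra.
Qed.

Lemma sum_offdiag_pairs (N : 'I_n -> R) :
  \sum_j \sum_(i | i != j) ((N j + N i) / 2) = (n%:R - 1) * \sum_j N j.
Proof.
have offdiag j : \sum_(i | i != j) ((N j + N i) / 2) = \sum_i ((N j + N i) / 2) - N j.
  by rewrite [in RHS](bigD1 j) //=; lra.
under eq_bigr do rewrite offdiag -mulr_suml big_split /= sumr_const card_ord.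
rewrite sumrB -!mulr_suml big_split /= sumrMnl sumr_const card_ord.
by rewrite -mulrnDl -mulr_natr; field.
Qed.

Lemma qform_diag_approx M y : qhermitian M ->
  `|qform M y - \sum_j qre (M j j) * qnorm2 (y j 0)| <= offmax M * (n%:R - 1) * vnorm2 y.
Proof.
move=> herm.
have -> : qform M y - \sum_j qre (M j j) * qnorm2 (y j 0) =
    \sum_j \sum_(i | i != j) qre (qconj (y j 0) * M j i * y i 0).
  rewrite qformE -sumrB; apply: eq_bigr => j _.
  by rewrite (bigD1 j) // (qhermitian_diag herm j) qre_conj_real_mul addrAC subrr add0r.
rewrite -mulrA -sum_offdiag_pairs mulr_sumr.
apply: le_trans (ler_norm_sum _ _ _) (ler_sum _ _) => j _.
rewrite mulr_sumr; apply: le_trans (ler_norm_sum _ _ _) (ler_sum _ _) => i ij.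
apply: le_trans (qre_conj_mul_le _ _ _) _.
by rewrite ler_wpM2r ?qabs_le_offmax 1?eq_sym // divr_ge0 // addr_ge0 ?qnorm2_ge0.
Qed.
End QuadraticForm.

Section EigenvalueComparison.
Variable R : realType.
Local Notation quat := (quat R).
Variables (n : nat) (A U V : 'M[quat]_n) (mu : 'I_n -> R).
Hypotheses (U1 : qmxct U *m U = 1%:M) (V1 : qmxct V *m V = 1%:M).
Hypothesis Umu : qmxct U *m (A *m U) = qmxdiag mu.
Local Notation D := (qmxct V *m (A *m V)).

Lemma exists_common_vector (X Y : {set 'I_n}) : (n < #|X| + #|Y|)%N ->
  exists a y : 'cV[quat]_n, [/\ 0 < vnorm2 a, forall j, j \notin X -> a j 0 = 0,
    forall j, j \notin Y -> y j 0 = 0 & U *m a = V *m y].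
Proof.
move=> XY; pose inS (x : 'I_n + 'I_n) := match x with inl j => j \in X | inr j => j \in Y end.
pose S := [set x | inS x].
have cardS : #|S| = (#|X| + #|Y|)%N.
  by rewrite -!sum1_card big_sumType; congr (_ + _)%N; apply: eq_bigl => j; rewrite inE.
pose B r (x : 'I_n + 'I_n) := match x with inl j => U r j | inr j => - V r j end.
have [|z [o zo] [zS zB]] := underdetermined_kernel (@quat_unit R) B (S := S).
  by rewrite cardS.
pose a : 'cV_n := \col_j z (inl j); pose y : 'cV_n := \col_j z (inr j).
have Uay : U *m a = V *m y.
  apply/matrixP => r c; rewrite !mxE.
  under eq_bigr do rewrite mxE; under [RHS]eq_bigr do rewrite mxE.
  move/eqP: (zB r); rewrite big_sumType addr_eq0 => /eqP ->.
  by rewrite -sumrN; apply: eq_bigr => j _; rewrite mulNr opprK.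
exists a, y; split=> //; last 2 first.
- by move=> j jX; rewrite mxE zS // inE.
- by move=> j jY; rewrite mxE zS // inE.
have [j aj|a0] := pickP (fun j => a j 0 != 0); first exact: vnorm2_gt0 aj.
have {}a0 : a = 0 by apply/matrixP => j c; rewrite ord1 [RHS]mxE; apply/eqP/negbFE/a0.
have y0 : y = 0 by rewrite -[y]mul1mx -V1 -mulmxA -Uay a0 !mulmx0.
by case: o zo => j; [move/matrixP/(_ j 0): a0 | move/matrixP/(_ j 0): y0];
  rewrite !mxE => ->; rewrite eqxx.
Qed.

Lemma exists_common_rayleigh (X Y : {set 'I_n}) : (n < #|X| + #|Y|)%N ->
  exists a y : 'cV[quat]_n, [/\ 0 < vnorm2 a, forall j, j \notin X -> a j 0 = 0,
    forall j, j \notin Y -> y j 0 = 0,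
    \sum_j mu j * qnorm2 (a j 0) = qform D y & vnorm2 y = vnorm2 a].
Proof.
move=> XY; have [a [y [a_gt0 aX yY Uay]]] := exists_common_vector XY.
exists a, y; split=> //; first by rewrite -qform_diag -Umu -qform_mulmx Uay qform_mulmx.
by rewrite -(vnorm2_unitary y V1) -Uay vnorm2_unitary.
Qed.

Hypothesis hermD : qhermitian D.

Lemma diag_sub_eig_le (X Y : {set 'I_n}) alpha beta : (n < #|X| + #|Y|)%N ->
  {in X, forall j, mu j <= alpha} -> {in Y, forall j, beta <= qre (D j j)} ->
  beta - alpha <= offmax D * (n%:R - 1).
Proof.
move=> XY muX dY; have [a [y [a_gt0 aX yY mu_a ya]]] := exists_common_rayleigh XY.
rewrite -(ler_pM2r a_gt0).
have a_supp j : j \notin X -> qnorm2 (a j 0) = 0 by move/aX->; rewrite qnorm20.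
have y_supp j : j \notin Y -> qnorm2 (y j 0) = 0 by move/yY->; rewrite qnorm20.
have := sum_weighted_le (fun j => qnorm2_ge0 (a j 0)) a_supp muX.
have := sum_weighted_ge (fun j => qnorm2_ge0 (y j 0)) y_supp dY.
have := qform_diag_approx y hermD; rewrite ler_norml -mu_a -/(vnorm2 a) -/(vnorm2 y) ya.
by move=> /andP[? ?] ? ?; lra.
Qed.

Lemma eig_sub_diag_le (X Y : {set 'I_n}) alpha beta : (n < #|X| + #|Y|)%N ->
  {in X, forall j, alpha <= mu j} -> {in Y, forall j, qre (D j j) <= beta} ->
  alpha - beta <= offmax D * (n%:R - 1).
Proof.
move=> XY muX dY; have [a [y [a_gt0 aX yY mu_a ya]]] := exists_common_rayleigh XY.
rewrite -(ler_pM2r a_gt0).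
have a_supp j : j \notin X -> qnorm2 (a j 0) = 0 by move/aX->; rewrite qnorm20.
have y_supp j : j \notin Y -> qnorm2 (y j 0) = 0 by move/yY->; rewrite qnorm20.
have := sum_weighted_ge (fun j => qnorm2_ge0 (a j 0)) a_supp muX.
have := sum_weighted_le (fun j => qnorm2_ge0 (y j 0)) y_supp dY.
have := qform_diag_approx y hermD; rewrite ler_norml -mu_a -/(vnorm2 a) -/(vnorm2 y) ya.
by move=> /andP[? ?] ? ?; lra.
Qed.

Variable s : 'S_n.
Hypothesis mu_sorted : forall i j : 'I_n, (i <= j)%N -> mu j <= mu i.
Hypothesis D_sorted :
  forall i j : 'I_n, (i <= j)%N -> qre (D (s j) (s j)) <= qre (D (s i) (s i)).

Lemma eig_diag_dist i : `|mu i - qre (D (s i) (s i))| <= offmax D * (n%:R - 1).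
Proof.
have card_perm (P : pred 'I_n) : #|s @: [set j | P j]| = #|[set j | P j]|.
  exact/card_imset/perm_inj.
rewrite ler_norml; apply/andP; split.
  rewrite lerNl opprB; apply: (diag_sub_eig_le (X := [set j : 'I_n | (i <= j)%N])
    (Y := s @: [set j : 'I_n | (j <= i)%N])).
  - by rewrite card_perm addnC card_le_ge.
  - by move=> j; rewrite inE; apply: mu_sorted.
  - by move=> x /imsetP[j]; rewrite inE => ji ->; apply: D_sorted.
apply: (eig_sub_diag_le (X := [set j : 'I_n | (j <= i)%N])
  (Y := s @: [set j : 'I_n | (i <= j)%N])).
- by rewrite card_perm card_le_ge.
- by move=> j; rewrite inE; apply: mu_sorted.
- by move=> x /imsetP[j]; rewrite inE => ij ->; apply: D_sorted.
Qed.
End EigenvalueComparison.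

Unset Implicit Arguments.

Theorem theorem3p6 (R : realType) (n : nat) (Q : dqmx R n) (eps : R) :
  (2 <= n)%N -> dqhermitian Q -> 0 < eps ->
  exists N : nat, (0 < N)%N /\
  forall Qs : nat -> dqmx R n, alg1_run Q eps Qs ->
  exists T : nat, (T <= N)%N /\
    (forall t : nat, (t < T)%N -> eps <= offmax (dst (Qs t))) /\
    offmax (dst (Qs T)) < eps /\
    forall (mu : 'I_n -> R) (s : 'S_n),
      (forall i j : 'I_n, (i <= j)%N -> mu j <= mu i) ->
      qeigenvalues (dst Q) mu ->
      (forall i j : 'I_n, (i <= j)%N ->
         qre (dst (Qs T) (s j) (s j)) <= qre (dst (Qs T) (s i) (s i))) ->
      \big[Num.max/0]_(i < n) `|mu i - qre (dst (Qs T) (s i) (s i))|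
        < Num.sqrt (n%:R * (n%:R - 1)) * eps.
Proof.
move=> n2 /(congr1 (@dst R n)) herm eps_gt0; exists (alg1_bound Q eps); split=> // Qs run.
have [T [TN running stopT]] := alg1_run_stops herm eps_gt0 run.
exists T; do 3!split=> //; move=> mu s mu_sorted [U [/qunitaryE U1 Umu]] D_sorted.
have [[V V1 DT] _] := alg1_run_invariant herm eps_gt0 run running.
rewrite !qmxmulE in Umu; rewrite DT in stopT D_sorted *.
have hermD := qhermitian_conj V herm.
have offmax_lt := mul_predn_lt_sqrt n2 (offmax_ge0 _) stopT.
apply/bigmax_ltP; split=> [|i _]; last first.
  exact: le_lt_trans (eig_diag_dist U1 V1 Umu hermD mu_sorted D_sorted i) offmax_lt.
by apply: le_lt_trans offmax_lt; rewrite mulr_ge0 ?offmax_ge0 // subr_ge0 ler1n ltnW.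
Qed.
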